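(* Let $M$ be an $n$-player Dec-POMDP satisfying hierarchical information sharing (HIS), fix a stage $\tau$, an occupancy state $s_\tau$ and a function $\beta_\tau$, and consider the single-stage subgame $G_{s_\tau}^{\beta_\tau}$ and the common-payoff perfect-information extensive-form game $\bar G_{s_\tau}^{\beta_\tau}$ (both defined in the context). Define functions $\beta^{i,*}_\tau$, $i=n,n-1,\dots,1$, on nodes of player $i$ and actions $u^i_\tau\in U^i$ by $$\beta^{n,*}_\tau(\varsigma^n_\tau,u^n_\tau)=R(\varsigma^n_\tau,u^n_\tau),\qquad \beta^{i,*}_\tau(\varsigma^i_\tau,u^i_\tau)=\mathbb{E}_{\varsigma^{i+1}_\tau\sim T(\cdot\mid \varsigma^i_\tau,u^i_\tau)}\Big\{\max_{u^{i+1}_\tau\in U^{i+1}}\beta^{i+1,*}_\tau(\varsigma^{i+1}_\tau,u^{i+1}_\tau)\Big\}\ (i<n).$$ Then: (a) these functions are the optimal action-value functions of $\bar G_{s_\tau}^{\beta_\tau}$ (i.e. they solve Bellman's optimality equations of $\bar G_{s_\tau}^{\beta_\tau}$), and the optimal value of $\bar G_{s_\tau}^{\beta_\tau}$, namely $\mathbb{E}_{\varsigma^1_\tau}\{\max_{u^1_\tau}\beta^{1,*}_\tau(\varsigma^1_\tau,u^1_\tau)\}$ with $\varsigma^1_\tau=(s_\tau,o^1_\tau)$ and $o^1_\tau$ distributed according to the marginal of $s_\tau$, equals the optimal value $\max_{a_\tau}Q_{\beta_\tau}(s_\tau,a_\tau)$ of $G_{s_\tau}^{\beta_\tau}$; (b)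 any optimal solution of $\bar G_{s_\tau}^{\beta_\tau}$ is also an optimal solution of $G_{s_\tau}^{\beta_\tau}$: if $\sigma$ assigns an action to every node so as to maximize the expected payoff of $\bar G_{s_\tau}^{\beta_\tau}$, then the joint decision rule defined recursively for $i=1,\dots,n$ by $a^i_\tau(o^i_\tau)=\sigma(\varsigma^i_\tau)$ with $\varsigma^i_\tau=\langle s_\tau,o^{1:i}_\tau,a^{1:i-1}_\tau(o^{1:i-1}_\tau)\rangle$ maximizes $Q_{\beta_\tau}(s_\tau,\cdot)$; (c) in particular, the greedy decision rules defined recursively for $i=1,\dots,n$ by $$a^{i,*}_\tau(o^i_\tau)\in\arg\max_{u^i_\tau\in U^i}\beta^{i,*}_\tau(\varsigma^i_\tau,u^i_\tau),\qquad \varsigma^i_\tau=\langle s_\tau,o^{1:i}_\tau,a^{1:i-1,*}_\tau(o^{1:i-1}_\tau)\rangle,$$ form a joint decision rule $a^*_\tau=(a^{1,*}_\tau,\dots,a^{n,*}_\tau)$ that is optimal for $G_{s_\tau}^{\beta_\tau}$.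
   Context: An $n$-player Dec-POMDP is $M=\langle n,X,U,Z,p,r,s_0,\gamma,\ell\rangle$: $X$ a finite set of hidden states; $U^i$ a finite action set of player $i$, $U=U^1\times\dots\times U^n$; $Z^i$ a finite observation set of player $i$, $Z=Z^1\times\dots\times Z^n$; $p(y,z\mid x,u)$ the probability of moving from state $x$ to state $y$ and receiving joint observation $z$ after joint action $u$; $r\colon X\times U\to\mathbb{R}$ the reward; $s_0$ an initial distribution on $X$; $\gamma$ a discount factor; $\ell$ the number of stages. The private history of player $i$ at stage $\tau$ is $o^i_\tau=(u^i_{0:\tau-1},z^i_{1:\tau})$ (with $o^i_0=\emptyset$) and the joint history is $o_\tau=(o^1_\tau,\dots,o^n_\tau)$. Hierarchical information sharing (HIS): for every player $i>1$ there is a map $\zeta^i$ with $\zeta^i(z^i_\tau)=(u^{i-1}_{\tau-1},z^{i-1}_\tau)$, so that the private history $o^i_\tau$ of player $i$ determines the private histories $o^{1}_\tau,\dots,o^{i-1}_\tau$ of all players below it (player $n$'s history determines the joint history). A private decision rule $a^i_\tau$ maps private histories $o^i_\tau$ to actions in $U^i$; a joint decision rule is $a_\tau=(a^1_\tau,\dots,a^n_\tau)$ with $a_\tau(o)=(a^1_\tau(o^1),\dots,a^n_\tau(o^n))$; we write $a^{1:i}_\tau(o^{1:i}_\tau)=(a^1_\tau(o^1_\tau),\dots,a^i_\tau(o^i_\tau))$. An occupancy state $s_\tau$ is a probability distribution over pairs $(x,o)$ of a hidden state and a joint $\tau$-step history. Given a function $\beta_\tau\colon(x,o,u)\mapsto\beta_\tau(x,o,u)\in\mathbb{R}$,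 set $Q_{\beta_\tau}(s_\tau,a_\tau)=\sum_{x,o}s_\tau(x,o)\,\beta_\tau(x,o,a_\tau(o))$. The single-stage subgame $G_{s_\tau}^{\beta_\tau}$ is the common-payoff game in which the $n$ players choose a joint decision rule $a_\tau$ to maximize $Q_{\beta_\tau}(s_\tau,a_\tau)$. The extensive-form game $\bar G_{s_\tau}^{\beta_\tau}$: a central planner acts for players $1,2,\dots,n$ in turn. Nodes of player $1$ are $\varsigma^1_\tau=(s_\tau,o^1_\tau)$, reached with the marginal probability of $o^1_\tau$ under $s_\tau$; at a node $\varsigma^i_\tau$ of player $i$ the planner chooses $u^i_\tau\in U^i$, and for $i<n$ the game moves to the node $\varsigma^{i+1}_\tau=(\varsigma^i_\tau,u^i_\tau,o^{i+1}_\tau)$ of player $i+1$ with probability $T(\varsigma^{i+1}_\tau\mid\varsigma^i_\tau,u^i_\tau)=\Pr\{o^{i+1}_\tau\mid s_\tau,o^1_\tau,\dots,o^i_\tau\}$ (computed from $s_\tau$). After player $n$ chooses $u^n_\tau$ at $\varsigma^n_\tau$, the common payoff is $R(\varsigma^n_\tau,u^n_\tau)=\mathbb{E}_{x\sim\Pr\{\cdot\mid\varsigma^n_\tau,u^n_\tau\}}\{\beta_\tau(x,o,u)\}$, where $o=(o^1_\tau,\dots,o^n_\tau)$ and $u=(u^1_\tau,\dots,u^n_\tau)$ are read off the node and $\Pr\{x\mid\varsigma^n_\tau\}=s_\tau(x\mid o)$. The optimal action-value function of player $i$ gives, at node $\varsigma^i_\tau$ and action $u^i_\tau$, the maximal expected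 payoff obtainable after playing $u^i_\tau$ there. *)

(* Players are indexed 0..n-1 (paper: 1..n). *)
From HB Require Import structures.
From mathcomp Require Import all_boot all_order all_algebra.
Set Implicit Arguments. Unset Strict Implicit. Unset Printing Implicit Defensive.
Import Order.TTheory GRing.Theory Num.Theory.
Local Open Scope ring_scope.

Section Defs.
Variables (R : realFieldType) (n : nat) (X : finType) (O U : 'I_n -> finType).

Definition jhist := {dffun forall i : 'I_n, O i}.
Definition jact := {dffun forall i : 'I_n, U i}.

Definition agree_h (k : nat) (o o' : jhist) : bool :=
  [forall j : 'I_n, (j < k)%N ==> (o j == o' j)].
Definition agree_a (k : nat) (u u' : jact) : bool :=
  [forall j : 'I_n, (j < k)%N ==> (u j == u' j)].

(* maximum of f over the (finite) set P; 0 by convention if P is empty *)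
Definition maxf (T : finType) (P : pred T) (f : T -> R) : R :=
  if [pick t | P t] is Some t0 then \big[Num.max/f t0]_(t | P t) f t else 0.

(* HIS at the stage: det i j (o^i) is the history of player j determined by
   the history o^i of player i (j < i); a joint history is consistent if it
   obeys these maps. *)
Definition consistent (det : forall i j : 'I_n, O i -> O j) (o : jhist) : Prop :=
  forall i j : 'I_n, (j < i)%N -> o j = det i j (o i).

Definition drule := forall i : 'I_n, O i -> U i.
Definition jact_of (a : drule) (o : jhist) : jact := finfun (fun i => a i (o i)).

(* strategies of \bar G: sigma_i chooses u^i at the node
   (s, o^{1:i}, u^{1:i-1}); it is represented on full tuples and must depend
   only on the components o^{<=i}, u^{<i}. *)
Definition strategy := forall i : 'I_n, jhist -> jact -> U i.
Definition is_strategy (sg : strategy) : Prop :=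
  forall (i : 'I_n) (o o' : jhist) (u u' : jact),
    agree_h i.+1 o o' -> agree_a i u u' -> sg i o u = sg i o' u'.

Definition upd (u : jact) (j : 'I_n) (x : U j) : jact :=
  finfun (dfwith (fun k => u k) x).

Definition play (sg : strategy) (o : jhist) (k : nat) (u : jact) : jact :=
  foldl (fun v (j : 'I_n) => upd v (sg j o v)) u (filter (fun j : 'I_n => (k <= j)%N) (enum 'I_n)).

Variables (s : X -> jhist -> R) (beta : X -> jhist -> jact -> R).

Definition sO (o : jhist) : R := \sum_x s x o.
Definition mass (k : nat) (o : jhist) : R := \sum_(o' | agree_h k o o') sO o'.

Definition Rnode (o : jhist) (u : jact) : R := \sum_x (s x o / sO o) * beta x o u.

(* beta^{i,*}, computed backwards; bstar_aux m is the function of player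
   n-1-m (0-based).  The expectation over varsigma^{i+1} ~ T(.|varsigma^i,u^i)
   is the conditional expectation given o^{<=i}; the max over u^{i+1} is the
   max over joint actions agreeing with u on components <= i. *)
Fixpoint bstar_aux (m : nat) (o : jhist) (u : jact) : R :=
  match m with
  | 0 => Rnode o u
  | m'.+1 =>
      \sum_(o' | agree_h (n - m'.+1) o o')
        (sO o' / mass (n - m'.+1) o) *
        maxf (agree_a (n - m'.+1) u) (bstar_aux m' o')
  end.

Definition betastar (i : 'I_n) : jhist -> jact -> R := bstar_aux (n - i.+1).

Definition Vext : R := \sum_o sO o * maxf xpredT (bstar_aux (n - 1) o).

Definition Q (a : drule) : R := \sum_x \sum_o s x o * beta x o (jact_of a o).
Definition optimal_drule (a : drule) : Prop := forall a' : drule, Q a' <= Q a.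

(* expected payoff in \bar G, after node (o^{<=i}, u^{<i}) of player i and
   action u^i (read off u), the later players following sg *)
Definition cont (sg : strategy) (i : 'I_n) (o : jhist) (u : jact) : R :=
  \sum_x \sum_(o' | agree_h i.+1 o o')
     (s x o' / mass i.+1 o) * beta x o' (play sg o' i.+1 u).

(* expected payoff of \bar G under sg (the initial u0 is overwritten) *)
Definition Jext (sg : strategy) : R :=
  if [pick u : jact] is Some u0 then
    \sum_x \sum_o s x o * beta x o (play sg o 0 u0)
  else 0.

Definition induced (sg : strategy) (a : drule) : Prop :=
  forall x o, s x o != 0 -> forall i : 'I_n, a i (o i) = sg i o (jact_of a o).

Definition greedy (a : drule) : Prop :=
  forall x o, s x o != 0 -> forall (i : 'I_n) (u' : jact),
    agree_a i (jact_of a o) u' -> betastar i o u' <= betastar i o (jact_of a o).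

End Defs.

From HB Require Import structures.
From mathcomp Require Import all_boot all_order all_algebra.
From mathcomp Require Import zify ring.
From Stdlib Require Import FunctionalExtensionality.
Import Order.TTheory GRing.Theory Num.Theory.
Local Open Scope ring_scope.
Set Implicit Arguments. Unset Strict Implicit. Unset Printing Implicit Defensive.

(* Both games are evaluated through nested conditional expectations given the
   histories of the first k players.  In \bar G, backward induction with the
   tower property of conditional expectations shows that beta^{i,*} is the
   optimal action-value of player i, attained by the strategy maximizing it at
   every node.  In G, the expected value of beta^{k,*} at the actions chosen by
   a decision rule a equals Q(a) for k = n and can only grow as k decreases,
   because beta^{k-1,*} is an expected maximum over the action of player k; at
   k = 1 it is bounded by the value of \bar G.  For a greedy rule all these
   steps are equalities.  Finally, under HIS the history of player i
   determines those of the players before i, so a strategy of \bar G can be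
   turned into a decision rule of G, player by player, with the same payoff. *)

Lemma down_ind m (P : nat -> Prop) :
  P m -> (forall k, (k < m)%N -> P k.+1 -> P k) -> forall k, (k <= m)%N -> P k.
Proof.
move=> Pm IH k km; rewrite -(subKn km).
elim: (m - k)%N (leq_subr k m) => [|d IHd] dm; first by rewrite subn0.
by apply: IH; [rewrite ltn_subrL; lia | rewrite subnSK //; apply/IHd/ltnW].
Qed.

Lemma ord_down_ind n (P : 'I_n -> Prop) :
  (forall i : 'I_n, i.+1 = n -> P i) ->
  (forall i j : 'I_n, val j = i.+1 -> P j -> P i) -> forall i, P i.
Proof.
move=> Plast IH i.
have Pk : forall k, (k <= n.-1)%N -> forall j : 'I_n, val j = k -> P j.
  apply: down_ind => [j j_last|k kn IHk j jk].
    by apply: Plast; rewrite j_last prednK // (leq_ltn_trans _ (ltn_ord j)).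
  have k1n : (k.+1 < n)%N by rewrite -ltn_predRL.
  by apply: (IH j (Ordinal k1n)); [rewrite jk | apply: IHk].
have i_le : (i <= n.-1)%N.
  by rewrite -ltnS prednK ?ltn_ord // (leq_ltn_trans _ (ltn_ord i)).
exact: (Pk _ i_le i erefl).
Qed.

Section MaxF.
Variables (R : realFieldType) (T : finType).
Implicit Types (P : pred T) (f : T -> R).

Lemma le_maxf P f t : P t -> f t <= maxf P f.
Proof.
move=> Pt; rewrite /maxf; case: pickP => [t0 Pt0|/(_ t)]; last by rewrite Pt.
by rewrite (bigD1 t) //= le_max lexx.
Qed.

Lemma maxf_attained P f t : P t -> exists2 t', P t' & maxf P f = f t'.
Proof.
move=> Pt; rewrite /maxf; case: pickP => [t0 Pt0|/(_ t)]; last by rewrite Pt.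
elim/big_ind: _ => [|x y [tx Ptx ->] [ty Pty ->]|t' Pt']; first by exists t0.
  by case: (leP (f tx) (f ty)); [exists ty | exists tx].
by exists t'.
Qed.

Lemma maxf_argmax P f t :
  P t -> (forall t', P t' -> f t' <= f t) -> maxf P f = f t.
Proof.
move=> Pt f_le; apply/le_anti; rewrite le_maxf // andbT.
by have [t' Pt' ->] := maxf_attained f Pt; apply: f_le.
Qed.

Lemma eq_maxfl P P' f : P =1 P' -> maxf P f = maxf P' f.
Proof.
by move=> eqP'; rewrite /maxf (eq_pick eqP'); case: pickP => // t0 _; apply: eq_bigl.
Qed.

End MaxF.

Section Agree.
Variables (n : nat) (T : 'I_n -> finType).
Implicit Types (f g h : jhist T).

Lemma agree_hP k f g :
  reflect (forall j : 'I_n, (j < k)%N -> f j = g j) (agree_h k f g).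
Proof.
apply: (iffP forallP) => [fg j jk | fg j]; first by move/implyP/(_ jk)/eqP: (fg j).
by apply/implyP => /fg ->.
Qed.

Lemma agree_h_refl k f : agree_h k f f.
Proof. exact/agree_hP. Qed.

Lemma agree_h_sym k f g : agree_h k f g -> agree_h k g f.
Proof. by move/agree_hP=> fg; apply/agree_hP => j /fg. Qed.

Lemma agree_h_trans k f g h : agree_h k f g -> agree_h k g h -> agree_h k f h.
Proof. by move=> /agree_hP fg /agree_hP gh; apply/agree_hP => j jk; rewrite fg ?gh. Qed.

Lemma agree_h_class k f g : agree_h k f g -> agree_h k f =1 agree_h k g.
Proof.
move=> fg h; apply/idP/idP; first exact/agree_h_trans/agree_h_sym.
exact: agree_h_trans.
Qed.

Lemma agree_h_le k k' f g : (k <= k')%N -> agree_h k' f g -> agree_h k f g.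
Proof. by move=> kk' /agree_hP fg; apply/agree_hP => j jk; apply/fg/(leq_trans jk). Qed.

Lemma agree_h_full f g : agree_h n f g -> f = g.
Proof. by move/agree_hP=> fg; apply/ffunP => j; apply: fg. Qed.

End Agree.

Section AgreeAct.
Variables (n : nat) (U : 'I_n -> finType).
Implicit Types (u v : jact U).

Lemma agree_aP k u v :
  reflect (forall j : 'I_n, (j < k)%N -> u j = v j) (agree_a k u v).
Proof. exact: agree_hP. Qed.

Lemma agree_a_refl k u : agree_a k u u.
Proof. exact: agree_h_refl. Qed.

Lemma agree_a_sym k u v : agree_a k u v -> agree_a k v u.
Proof. exact: agree_h_sym. Qed.

Lemma agree_a_class k u v : agree_a k u v -> agree_a k u =1 agree_a k v.
Proof. exact: agree_h_class. Qed.

Lemma agree_a_le k k' u v : (k <= k')%N -> agree_a k' u v -> agree_a k u v.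
Proof. exact: agree_h_le. Qed.

Lemma agree_a_full u v : agree_a n u v -> u = v.
Proof. exact: agree_h_full. Qed.

End AgreeAct.

Section Play.
Variables (n : nat) (O U : 'I_n -> finType).
Implicit Types (o : jhist O) (u v : jact U) (sg : strategy O U).

Lemma upd_id u (j : 'I_n) : upd u (u j) = u.
Proof.
apply/ffunP => k; rewrite ffunE.
by have [<-|jk] := eqVneq j k; [rewrite dfwith_in | rewrite dfwith_out].
Qed.

Lemma agree_a_upd k u (j : 'I_n) (x : U j) : (k <= j)%N -> agree_a k u (upd u x).
Proof.
move=> kj; apply/agree_aP => i ik; rewrite ffunE dfwith_out //.
by apply: contraTneq ik => <-; rewrite -leqNgt.
Qed.

Lemma upd_agree_a u v (j : 'I_n) (x : U j) :
  agree_a j u v -> agree_a j.+1 (upd u x) (upd v x).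
Proof.
move/agree_aP=> uv; apply/agree_aP => i; rewrite ltnS leq_eqVlt !ffunE.
have [<-|ji] := eqVneq j i; first by rewrite !dfwith_in.
rewrite !dfwith_out // => /orP[/eqP/val_inj/esym/eqP|/uv //].
by rewrite (negPf ji).
Qed.

Lemma agree_a_upd_self u v (j : 'I_n) :
  agree_a j u v -> agree_a j.+1 (upd u (v j)) v.
Proof. by move/(upd_agree_a (v j)); rewrite upd_id. Qed.

Lemma filter_leq_iota m d : [seq k <- iota 0 (m + d) | (m <= k)%N] = iota m d.
Proof.
rewrite iotaD filter_cat add0n (@eq_in_filter _ _ pred0) ?filter_pred0; last first.
  by move=> k; rewrite mem_iota add0n /= => km; rewrite leqNgt km.
by apply/all_filterP/allP => k; rewrite mem_iota => /andP[].
Qed.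

Lemma filter_leq_enum_ord (j : 'I_n) :
  [seq k : 'I_n <- enum 'I_n | (j <= k)%N] = j :: [seq k : 'I_n <- enum 'I_n | (j < k)%N].
Proof.
have val_filter m : map val [seq k : 'I_n <- enum 'I_n | (m <= k)%N]
    = [seq k <- iota 0 n | (m <= k)%N] by rewrite -val_enum_ord filter_map.
apply: (inj_map val_inj); rewrite /= !val_filter; case: j => m /= mn.
rewrite -{1}(subnKC (ltnW mn)) -{2}(subnKC mn) !filter_leq_iota.
by rewrite -(subnSK mn).
Qed.

Lemma play_step sg o (j : 'I_n) u :
  play sg o j u = play sg o j.+1 (upd u (sg j o u)).
Proof. by rewrite /play filter_leq_enum_ord. Qed.

Lemma play_end sg o u : play sg o n u = u.
Proof.
rewrite /play (@eq_filter _ _ pred0) ?filter_pred0 // => k.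
by rewrite /= leqNgt ltn_ord.
Qed.

End Play.

Section Game.
Variables (R : realFieldType) (n : nat) (X : finType) (O U : 'I_n -> finType).
Variables (s : X -> jhist O -> R) (beta : X -> jhist O -> jact U -> R).
Hypothesis s_ge0 : forall x o, 0 <= s x o.
Implicit Types (o : jhist O) (u v : jact U) (sg : strategy O U).

Lemma sO_ge0 o : 0 <= sO s o.
Proof. exact: sumr_ge0. Qed.

Lemma mass_ge0 k o : 0 <= mass s k o.
Proof. by apply: sumr_ge0 => o' _; apply: sO_ge0. Qed.

Lemma s_le_sO x o : s x o <= sO s o.
Proof. by rewrite /sO (bigD1 x) //= lerDl sumr_ge0. Qed.

Lemma sO_le_mass k o : sO s o <= mass s k o.
Proof.
rewrite /mass (bigD1 o) ?agree_h_refl //= lerDl.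
by apply: sumr_ge0 => o' _; apply: sO_ge0.
Qed.

Lemma mass_agree k o o' : agree_h k o o' -> mass s k o = mass s k o'.
Proof. by move/agree_h_class; apply: eq_bigl. Qed.

Lemma mass_eq0_sO k o : mass s k o = 0 -> sO s o = 0.
Proof. by move=> m0; apply/le_anti; rewrite sO_ge0 -m0 sO_le_mass. Qed.

Lemma mass_eq0_s x k o : mass s k o = 0 -> s x o = 0.
Proof. by move/mass_eq0_sO=> sO0; apply/le_anti; rewrite s_ge0 -sO0 s_le_sO. Qed.

(* Tower property of the conditional expectations given the first [k <= k']
   histories. *)
Lemma sum_prefix_tower k k' o (w : jhist O -> R) (G : jhist O -> jhist O -> R) :
  (k <= k')%N ->
  (forall o', mass s k' o' = 0 -> w o' = 0) ->
  (forall o' o'', agree_h k' o' o'' -> G o' o'' = G o'' o'') ->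
  \sum_(o' | agree_h k o o') (sO s o' / mass s k o) *
     \sum_(o'' | agree_h k' o' o'') (w o'' / mass s k' o') * G o' o''
  = \sum_(o'' | agree_h k o o'') (w o'' / mass s k o) * G o'' o''.
Proof.
move=> kk' w0 G_prefix.
under eq_bigr => o' _ do rewrite big_distrr /=.
rewrite (exchange_big_dep (agree_h k o)) /=; last first.
  by move=> o' o'' oo' /(agree_h_le kk'); apply: agree_h_trans.
apply: eq_bigr => o'' oo''.
transitivity ((\sum_(o' | agree_h k' o'' o') sO s o') *
              (w o'' / mass s k' o'' * (G o'' o'' / mass s k o))).
  rewrite big_distrl /=; apply: eq_big => [o'|o' /andP[_ o'o'']].
    apply/andP/idP => [[_ /agree_h_sym //]|o''o'].
    by split; [apply: agree_h_trans oo'' (agree_h_le kk' o''o') | apply: agree_h_sym].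
  rewrite (G_prefix _ _ o'o'') (mass_agree o'o''); ring.
rewrite -/(mass s k' o'') mulrA (mulrCA (mass s k' o'')).
have [m0|m_neq0] := eqVneq (mass s k' o'') 0; first by rewrite m0 w0 //; ring.
by rewrite mulfV // mulr1; ring.
Qed.

(* [betastar i] is [bstar i]; the [nat] index allows writing [bstar k.+1]. *)
Definition bstar (k : nat) := bstar_aux s beta (n - k.+1).

Lemma bstarS k o u : (k.+1 < n)%N ->
  bstar k o u = \sum_(o' | agree_h k.+1 o o') (sO s o' / mass s k.+1 o) *
                  maxf (agree_a k.+1 u) (bstar k.+1 o').
Proof.
move=> k1n; rewrite /bstar.
have -> : (n - k.+1 = (n - k.+2).+1)%N by lia.
by have /= -> : (n - (n - k.+2).+1 = k.+1)%N by lia.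
Qed.

Lemma bstar_last k : k.+1 = n -> bstar k = Rnode s beta.
Proof. by move=> k_last; rewrite /bstar k_last subnn. Qed.

Lemma bstar_agree k o o' u u' : (k < n)%N ->
  agree_h k.+1 o o' -> agree_a k.+1 u u' -> bstar k o u = bstar k o' u'.
Proof.
move=> kn oo' uu'; have [k_last|k_notlast] := eqVneq k.+1 n.
  by move: oo' uu'; rewrite bstar_last // k_last => /agree_h_full-> /agree_a_full->.
have k1n : (k.+1 < n)%N by rewrite ltn_neqAle k_notlast.
rewrite !bstarS // (mass_agree oo') (eq_bigl _ _ (agree_h_class oo')).
by apply: eq_bigr => o1 _; rewrite (eq_maxfl _ (agree_a_class uu')).
Qed.

Lemma sum_agree_h_full (F : jhist O -> R) o : \sum_(o' | agree_h n o o') F o' = F o.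
Proof.
rewrite (big_pred1 o) // => o'.
by apply/idP/eqP => [/agree_h_full -> // | ->]; apply: agree_h_refl.
Qed.

Lemma cont_last sg (i : 'I_n) o u : i.+1 = n -> cont s beta sg i o u = Rnode s beta o u.
Proof.
move=> i_last; rewrite /cont /Rnode i_last; apply: eq_bigr => x _.
by rewrite sum_agree_h_full play_end /mass sum_agree_h_full.
Qed.

Lemma contS sg (i j : 'I_n) o u : is_strategy sg -> val j = i.+1 ->
  cont s beta sg i o u = \sum_(o' | agree_h i.+1 o o') (sO s o' / mass s i.+1 o) *
                           cont s beta sg j o' (upd u (sg j o' u)).
Proof.
move=> sgS; case: j => m jn /= ji; subst m; set j := Ordinal jn.
under [RHS]eq_bigr => o' _ do rewrite /cont big_distrr /=.
rewrite [RHS]exchange_big /cont; apply: eq_bigr => x _.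
rewrite (@sum_prefix_tower i.+1 i.+2 o (s x)
   (fun o' o'' => beta x o'' (play sg o'' i.+2 (upd u (sg j o' u))))) //=.
- by apply: eq_bigr => o' _; rewrite (play_step sg o' j).
- by move=> o'; apply: mass_eq0_s.
by move=> o' o'' /= o'o''; rewrite (sgS j o' o'' u u) ?agree_a_refl.
Qed.

Hypothesis hU : forall i : 'I_n, (0 < #|U i|)%N.

Definition some_action (i : 'I_n) : U i := xchoose (card_gt0P (hU i)).

Definition argmax_strategy : strategy O U :=
  fun j o v => [arg max_(x > some_action j) bstar j o (upd v x)]%O.

Lemma argmax_strategy_max (j : 'I_n) o v (x : U j) :
  bstar j o (upd v x) <= bstar j o (upd v (argmax_strategy j o v)).
Proof. by rewrite /argmax_strategy; case: arg_maxP => // y _; apply. Qed.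

Lemma argmax_strategy_is_strategy : is_strategy argmax_strategy.
Proof.
move=> j o1 o2 v1 v2 o12 v12; rewrite /argmax_strategy.
suff -> : (fun x : U j => bstar j o1 (upd v1 x)) = (fun x => bstar j o2 (upd v2 x)) by [].
apply: functional_extensionality => x.
by apply: bstar_agree => //; apply: upd_agree_a.
Qed.

Lemma bstar_le_argmax (j : 'I_n) o u t :
  agree_a j u t -> bstar j o t <= bstar j o (upd u (argmax_strategy j o u)).
Proof.
move=> ut; rewrite (@bstar_agree j o o t (upd u (t j))) ?agree_h_refl //.
  exact: argmax_strategy_max.
exact/agree_a_sym/agree_a_upd_self.
Qed.

Lemma cont_le_bstar sg (i : 'I_n) o u :
  is_strategy sg -> cont s beta sg i o u <= bstar i o u.
Proof.
move=> sgS; elim/ord_down_ind: i o u => [i i_last|i j ji IH] o u.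
  by rewrite cont_last ?bstar_last.
have i1n : (i.+1 < n)%N by rewrite -ji ltn_ord.
rewrite (contS o u sgS ji) bstarS //; apply: ler_sum => o' _.
rewrite ler_wpM2l ?divr_ge0 ?sO_ge0 ?mass_ge0 //.
by apply: le_trans (IH _ _) _; rewrite ji; apply/le_maxf/agree_a_upd; rewrite ji.
Qed.

Lemma cont_argmax_strategy (i : 'I_n) o u :
  cont s beta argmax_strategy i o u = bstar i o u.
Proof.
elim/ord_down_ind: i o u => [i i_last|i j ji IH] o u.
  by rewrite cont_last ?bstar_last.
have i1n : (i.+1 < n)%N by rewrite -ji ltn_ord.
rewrite (contS o u argmax_strategy_is_strategy ji) bstarS //; apply: eq_bigr => o' _.
rewrite IH ji; congr (_ * _); symmetry; apply: maxf_argmax.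
  by apply: agree_a_upd; rewrite ji.
by move=> t ut; rewrite -ji; apply: bstar_le_argmax; rewrite ji.
Qed.

Hypothesis s_sum1 : \sum_x \sum_o s x o = 1.

Lemma mass0 o : mass s 0 o = 1.
Proof.
rewrite /mass (eq_bigl xpredT) => [|o']; last exact/agree_hP.
by rewrite /sO exchange_big.
Qed.

Lemma sum_prefix_tower0 k (w : jhist O -> R) (G : jhist O -> jhist O -> R) :
  (forall o', mass s k o' = 0 -> w o' = 0) ->
  (forall o' o'', agree_h k o' o'' -> G o' o'' = G o'' o'') ->
  \sum_o sO s o * \sum_(o' | agree_h k o o') (w o' / mass s k o) * G o o'
  = \sum_o w o * G o o.
Proof.
move=> w0 G_prefix; have [o0 _|no_hist] := pickP (@predT (jhist O)); last first.
  by rewrite !big_pred0.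
have agree0 : agree_h 0 o0 =1 xpredT by move=> o; apply/agree_hP.
have := sum_prefix_tower o0 (leq0n k) w0 G_prefix.
rewrite mass0 !(eq_bigl _ _ agree0).
under eq_bigr do rewrite divr1; under [in RHS]eq_bigr do rewrite divr1.
by [].
Qed.

Hypothesis hn : (0 < n)%N.
Let i0 : 'I_n := Ordinal hn.

Lemma Jext_cont sg : is_strategy sg -> exists u0,
  Jext s beta sg = \sum_o sO s o * cont s beta sg i0 o (upd u0 (sg i0 o u0)).
Proof.
move=> sgS; rewrite /Jext; case: pickP => [u0 _|/(_ (finfun some_action)) //].
exists u0; under [RHS]eq_bigr => o _ do rewrite /cont big_distrr /=.
rewrite [RHS]exchange_big; apply: eq_bigr => x _.
rewrite (@sum_prefix_tower0 1 (s x)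
   (fun o o' => beta x o' (play sg o' 1 (upd u0 (sg i0 o u0))))) /=.
- by apply: eq_bigr => o _; rewrite (play_step sg o i0).
- by move=> o; apply: mass_eq0_s.
by move=> o o' oo'; rewrite (sgS i0 o o' u0 u0) ?agree_a_refl.
Qed.

Lemma Jext_le_Vext sg : is_strategy sg -> Jext s beta sg <= Vext s beta.
Proof.
move=> sgS; have [u0 ->] := Jext_cont sgS.
apply: ler_sum => o _; rewrite ler_wpM2l ?sO_ge0 //.
exact: le_trans (cont_le_bstar _ _ _ sgS) (le_maxf _ _).
Qed.

Lemma Jext_argmax_strategy : Jext s beta argmax_strategy = Vext s beta.
Proof.
have [u0 ->] := Jext_cont argmax_strategy_is_strategy.
apply: eq_bigr => o _; rewrite cont_argmax_strategy; congr (_ * _).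
symmetry; apply: maxf_argmax => // t _.
by apply: (@bstar_le_argmax i0); apply/agree_aP.
Qed.

Lemma greedy_bstar_max a o (i : 'I_n) u : greedy s beta a -> sO s o != 0 ->
  agree_a i (jact_of a o) u -> bstar i o u <= bstar i o (jact_of a o).
Proof.
move=> aG /eqP sO_neq0.
have [x /andP[_ /lt0r_neq0 sx]] := psumr_neq0P (fun x _ => s_ge0 x o) sO_neq0.
exact: aG sx i u.
Qed.

Definition Qmix (k : nat) (a : drule O U) := \sum_o sO s o * bstar k o (jact_of a o).

Lemma Qmix_last k a : k.+1 = n -> Qmix k a = Q s beta a.
Proof.
move=> k_last; rewrite /Qmix /Q bstar_last // exchange_big /=.
apply: eq_bigr => o _; rewrite /Rnode big_distrr /=; apply: eq_bigr => x _.
have [sO0|sO_neq0] := eqVneq (sO s o) 0; last by rewrite mulrA mulrCA mulfV ?mulr1.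
have -> : s x o = 0 by apply/le_anti; rewrite s_ge0 -sO0 s_le_sO.
by rewrite sO0 !mul0r.
Qed.

Lemma QmixS k a : (k.+1 < n)%N ->
  Qmix k a = \sum_o sO s o * maxf (agree_a k.+1 (jact_of a o)) (bstar k.+1 o).
Proof.
move=> k1n; rewrite /Qmix; under eq_bigr do rewrite bstarS //.
rewrite (@sum_prefix_tower0 k.+1 (sO s)
   (fun o o' => maxf (agree_a k.+1 (jact_of a o)) (bstar k.+1 o'))) // => [o|o o' oo'].
  exact: mass_eq0_sO.
apply: eq_maxfl; apply: agree_a_class; apply/agree_aP => j jk.
by rewrite !ffunE (agree_hP _ _ _ oo').
Qed.

Lemma Q_le_Qmix a (i : 'I_n) : Q s beta a <= Qmix i a.
Proof.
elim/ord_down_ind: i => [i i_last|i j ji IH]; first by rewrite Qmix_last.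
have i1n : (i.+1 < n)%N by rewrite -ji ltn_ord.
apply: le_trans IH _; rewrite [Qmix i a]QmixS // /Qmix ji.
apply: ler_sum => o _; rewrite ler_wpM2l ?sO_ge0 //.
exact: le_maxf (agree_a_refl _ _).
Qed.

Lemma Q_greedy_Qmix a (i : 'I_n) : greedy s beta a -> Q s beta a = Qmix i a.
Proof.
move=> aG; elim/ord_down_ind: i => [i i_last|i j ji ->]; first by rewrite Qmix_last.
have i1n : (i.+1 < n)%N by rewrite -ji ltn_ord.
rewrite [Qmix i a]QmixS // /Qmix ji; apply: eq_bigr => o _.
have [->|sO_neq0] := eqVneq (sO s o) 0; first by rewrite !mul0r.
congr (_ * _); symmetry; apply: maxf_argmax => [|u]; first exact: agree_a_refl.
by rewrite -ji; apply: greedy_bstar_max.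
Qed.

Lemma Q_le_Vext a : Q s beta a <= Vext s beta.
Proof.
apply: le_trans (Q_le_Qmix a i0) _; apply: ler_sum => o _.
by rewrite ler_wpM2l ?sO_ge0 // (le_maxf (bstar i0 o)).
Qed.

Lemma Q_greedy a : greedy s beta a -> Q s beta a = Vext s beta.
Proof.
move=> aG; rewrite (Q_greedy_Qmix i0 aG); apply: eq_bigr => o _.
have [->|sO_neq0] := eqVneq (sO s o) 0; first by rewrite !mul0r.
congr (_ * _); symmetry; apply: maxf_argmax => // u _.
by apply: (@greedy_bstar_max a o i0) => //; apply/agree_aP.
Qed.

Lemma play_induced sg (a : drule O U) o : is_strategy sg ->
  (forall i, a i (o i) = sg i o (jact_of a o)) -> forall u, play sg o 0 u = jact_of a o.
Proof.
move=> sgS a_sg u.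
suff play_from : forall k, (k <= n)%N -> forall v, agree_a k v (jact_of a o) ->
    play sg o k v = jact_of a o by apply: play_from => //; apply/agree_aP.
apply: down_ind => [v /agree_a_full <-|k kn IH v va]; first exact: play_end.
rewrite (play_step sg o (Ordinal kn)) /=; apply: IH.
have -> : sg (Ordinal kn) o v = jact_of a o (Ordinal kn).
  by rewrite ffunE a_sg; apply: sgS; [apply: agree_h_refl | exact: va].
exact: (agree_a_upd_self (j := Ordinal kn) va).
Qed.

Lemma exists_induced_drule (det : forall i j : 'I_n, O i -> O j) sg :
  is_strategy sg -> exists a : drule O U, forall o, consistent det o ->
    forall i, a i (o i) = sg i o (jact_of a o).
Proof.
move=> sgS; have [o0 _|no_hist] := pickP (@predT (jhist O)); last first.
  by exists (fun i _ => some_action i) => o; have := no_hist o.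
suff induced_below k : (k <= n)%N -> exists a : drule O U, forall o, consistent det o ->
    forall i : 'I_n, (i < k)%N -> a i (o i) = sg i o (jact_of a o).
  by have [a a_sg] := induced_below n (leqnn n); exists a => o o_cons i; apply: a_sg.
elim: k => [_|k IH kn]; first by exists (fun i _ => some_action i).
have [a a_sg] := IH (ltnW kn); pose kk := Ordinal kn.
(* Player [k] evaluates [sg] on any joint history extending its own history
   [h] consistently: by HIS, [h] fixes the histories, hence the actions, of the
   players before [k]. *)
pose oh (h : O kk) : jhist O :=
  finfun (fun j : 'I_n => if (j < k)%N then det kk j h else dfwith (fun j => o0 j) h j).
pose a' : drule O U :=
  @dfwith _ (fun i => O i -> U i) a kk (fun h => sg kk (oh h) (jact_of a (oh h))).
have a'_lt (j : 'I_n) : (j < k)%N -> a' j = a j.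
  by move=> jk; rewrite /a' dfwith_out //; apply: contraTneq jk => <-; rewrite ltnn.
exists a' => o o_cons i ik.
have a_a' : agree_a k (jact_of a o) (jact_of a' o).
  by apply/agree_aP => j jk; rewrite !ffunE a'_lt.
have [ik'|ki] := ltnP i k.
  rewrite a'_lt // a_sg //; apply: sgS; first exact: agree_h_refl.
  exact: agree_a_le (ltnW ik') a_a'.
have -> : i = kk by apply: val_inj; apply/eqP; rewrite eqn_leq ki -ltnS ik.
have a'_kk : a' kk = fun h => sg kk (oh h) (jact_of a (oh h)) by rewrite /a' dfwith_in.
rewrite a'_kk; apply: sgS; apply/agree_hP => j jk; rewrite !ffunE.
- have [jk'|kj] := ltnP j k; first by rewrite (o_cons kk j jk').
  have -> : j = kk by apply: val_inj; apply/eqP; rewrite eqn_leq kj -ltnS jk.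
  by rewrite dfwith_in.
- by rewrite jk a'_lt // -(o_cons kk j jk).
Qed.

Lemma exists_greedy (det : forall i j : 'I_n, O i -> O j) :
  (forall x o, s x o != 0 -> consistent det o) -> exists a, greedy s beta a.
Proof.
move=> HIS; have [a a_sg] := exists_induced_drule det argmax_strategy_is_strategy.
exists a => x o sx i u au; change (bstar i o u <= bstar i o (jact_of a o)).
have a_oi : jact_of a o i = argmax_strategy i o (jact_of a o).
  by rewrite ffunE (a_sg o (HIS x o sx)).
by rewrite -(upd_id (jact_of a o) i) a_oi; apply: bstar_le_argmax.
Qed.

Lemma Q_induced sg a : is_strategy sg -> induced s sg a -> Q s beta a = Jext s beta sg.
Proof.
move=> sgS a_sg; rewrite /Jext; case: pickP => [u0 _|/(_ (finfun some_action)) //].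
apply: eq_bigr => x _; apply: eq_bigr => o _.
have [->|sx] := eqVneq (s x o) 0; first by rewrite !mul0r.
by rewrite (play_induced sgS (a_sg x o sx)).
Qed.

End Game.

Theorem theorem1 (R : realFieldType) (n : nat) (X : finType)
    (O U : 'I_n -> finType) (det : forall i j : 'I_n, O i -> O j)
    (s : X -> jhist O -> R) (beta : X -> jhist O -> jact U -> R)
    (hn : (0 < n)%N) (hU : forall i : 'I_n, (0 < #|U i|)%N)
    (s_ge0 : forall x o, 0 <= s x o)
    (s_sum1 : \sum_x \sum_o s x o = 1)
    (HIS : forall x o, s x o != 0 -> consistent det o) :
  (* (a) beta^{i,*} are the optimal action-value functions of \bar G *)
  (forall (i : 'I_n) (o : jhist O) (u : jact U),
      (forall sg : strategy O U, is_strategy sg -> cont s beta sg i o u <= betastar s beta i o u)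
      /\ (exists sg : strategy O U, is_strategy sg /\ cont s beta sg i o u = betastar s beta i o u))
  (* (a) Vext is the optimal value of \bar G ... *)
  /\ ((forall sg : strategy O U, is_strategy sg -> Jext s beta sg <= Vext s beta)
      /\ (exists sg : strategy O U, is_strategy sg /\ Jext s beta sg = Vext s beta))
  (* ... and equals max_a Q_beta(s, a) *)
  /\ ((forall a : drule O U, Q s beta a <= Vext s beta)
      /\ (exists a : drule O U, Q s beta a = Vext s beta))
  (* (b) *)
  /\ (forall sg : strategy O U, is_strategy sg ->
        (forall sg' : strategy O U, is_strategy sg' -> Jext s beta sg' <= Jext s beta sg) ->
        (exists a : drule O U, induced s sg a)
        /\ (forall a : drule O U, induced s sg a -> optimal_drule s beta a))
  (* (c) *)
  /\ ((exists a : drule O U, greedy s beta a)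
      /\ (forall a : drule O U, greedy s beta a -> optimal_drule s beta a)).
Proof.
have sg_star := argmax_strategy_is_strategy s beta hU.
have Jext_star := Jext_argmax_strategy beta s_ge0 hU s_sum1 hn.
have Q_le a : Q s beta a <= Vext s beta := Q_le_Vext beta s_ge0 s_sum1 hn a.
have [ag ag_greedy] := exists_greedy beta hU HIS.
split.
  move=> i o u; split=> [sg sgS|]; first exact: cont_le_bstar.
  by exists (argmax_strategy s beta hU); split=> //; apply: cont_argmax_strategy.
split; first by split=> [sg|]; [apply: Jext_le_Vext | exists (argmax_strategy s beta hU)].
split; first by split=> //; exists ag; apply: Q_greedy.
split.
  move=> sg sgS sg_opt; split.
    have [a a_sg] := exists_induced_drule hU det sgS.
    by exists a => x o sx; apply/a_sg/(HIS x o sx).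
  move=> a a_sg a'; rewrite (Q_induced beta hU sgS a_sg).
  by apply: le_trans (Q_le a') _; rewrite -Jext_star; apply: sg_opt.
split; first by exists ag.
by move=> a a_greedy a'; rewrite (Q_greedy s_ge0 s_sum1 hn a_greedy).
Qed.
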